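(* Let $G = (V, E, b, c)$ be a weighted hypergraph in which every vertex belongs to some edge, let $\mathtt{OPT}$ be a minimum-cost edge cover of $G$, and run procedure COVER on the stream of edges of $G$. Let $0 < \epsilon < 1$ and let $r^*$ be the largest integer such that $b(I(\leq r^* )) \leq \epsilon \cdot b(V)$, where $I(\leq r) = \{ v \in V \mid \mathrm{eff}_\infty(v) \leq r \}$. Then the edge collection $S(> r^* ) = \{ e \in E \mid \exists v \in V \text{ with } \mathrm{eff}_\infty(v) > r^* \text{ and } \mathrm{eid}_\infty(v) = \mathrm{id}(e) \}$ satisfies \[ c(S(> r^* )) < 8 \cdot c(\mathtt{OPT}) / \epsilon. \]
   Context: A weighted hypergraph $G = (V, E, b, c)$ has vertex set $V$, a multiset $E$ of non-empty edges $e \subseteq V$, benefits $b : V \to \mathbb{Q}_{>0}$ and costs $c : E \to \mathbb{Q}_{>0}$; $b(U) = \sum_{v \in U} b(v)$, $c(F) = \sum_{e \in F} c(e)$. An edge cover is a set $F \subseteq E$ whose union is $V$. Edges arrive in a stream $e_0, e_1, \dots$, and $\mathrm{id}(e)$ is a unique identifier of edge $e$. Procedure COVER maintains for each $v \in V$ a variable $\mathrm{eid}(v)$ (initially NULL) and an integer variable $\mathrm{eff}(v)$ (initially $-\infty$); $\mathrm{eff}_t(v)$ denotes its value just before $e_t$ is processed, and $\mathrm{eff}_\infty(v)$, $\mathrm{eid}_\infty(v)$ the values after the whole stream has been processed. For $T \subseteq e_t$ the level is $\mathrm{lev}_t(T) = \lceil \lg (b(T)/c(e_t)) \rceil$ ($\lg$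 = base-2 logarithm), and $T$ is effective at time $t$ if $\mathrm{lev}_t(T) > \mathrm{eff}_t(v)$ for every $v \in T$ (the empty set is vacuously effective). When $e_t$ arrives, COVER computes an effective subset $T \subseteq e_t$ of largest benefit $b(T)$ (any such subset) and, for every $v \in T$, sets $\mathrm{eid}(v) \leftarrow \mathrm{id}(e_t)$ and $\mathrm{eff}(v) \leftarrow \mathrm{lev}_t(T)$. *)

From HB Require Import structures.
From mathcomp Require Import all_boot all_order all_algebra.
From Stdlib Require Import ClassicalEpsilon.
Set Implicit Arguments. Unset Strict Implicit. Unset Printing Implicit Defensive.
Import Order.TTheory GRing.Theory Num.Theory.
Local Open Scope ring_scope.

(* ceil (lg q) for q > 0 : the (unique) integer k with 2^(k-1) < q <= 2^k.
   (For q <= 0 the value is irrelevant/unspecified.) *)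
Definition ceil_lg (q : rat) : int :=
  epsilon (inhabits 0%R) (fun k : int => (2%:Q ^ (k - 1) < q) && (q <= 2%:Q ^ k)).

Definition bsum (V : finType) (b : V -> rat) (A : {set V}) : rat :=
  \sum_(v in A) b v.

Definition cost (m : nat) (c : nat -> rat) (F : {set 'I_m}) : rat :=
  \sum_(i in F) c i.

(* The stream is e_0, ..., e_(m-1) with costs c 0, ..., c (m-1); id(e_t) = t. *)

Definition lev (V : finType) (b : V -> rat) (c : nat -> rat) (t : nat)
  (T : {set V}) : int := ceil_lg (bsum b T / c t).

(* eff values: None encodes -infinity *)
Definition lt_eff (o : option int) (k : int) : bool :=
  if o is Some x then x < k else true.
Definition le_eff (o : option int) (r : int) : bool :=
  if o is Some x then x <= r else true.
Definition gt_eff (o : option int) (r : int) : bool :=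
  if o is Some x then r < x else false.

Definition effective (V : finType) (b : V -> rat) (c : nat -> rat)
  (eff : V -> option int) (t : nat) (T : {set V}) : bool :=
  [forall v in T, lt_eff (eff v) (lev b c t T)].

(* State (eff, eid) of COVER just before e_t is processed, given the
   subsets T t chosen at each step. eid None = NULL. *)
Fixpoint cover_state (V : finType) (b : V -> rat) (c : nat -> rat)
  (T : nat -> {set V}) (t : nat) : (V -> option int) * (V -> option nat) :=
  match t with
  | 0 => (fun _ => None, fun _ => None)
  | t'.+1 =>
      let st := cover_state b c T t' in
      (fun v => if v \in T t' then Some (lev b c t' (T t')) else st.1 v,
       fun v => if v \in T t' then Some t' else st.2 v)
  end.

Definition valid_run (V : finType) (b : V -> rat) (e : nat -> {set V})
  (c : nat -> rat) (m : nat) (T : nat -> {set V}) : Prop :=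
  forall t, (t < m)%N ->
    [/\ T t \subset e t,
        effective b c (cover_state b c T t).1 t (T t) &
        forall T' : {set V}, T' \subset e t ->
          effective b c (cover_state b c T t).1 t T' ->
          bsum b T' <= bsum b (T t)].

Definition eff_inf (V : finType) (b : V -> rat) (c : nat -> rat)
  (T : nat -> {set V}) (m : nat) : V -> option int := (cover_state b c T m).1.
Definition eid_inf (V : finType) (b : V -> rat) (c : nat -> rat)
  (T : nat -> {set V}) (m : nat) : V -> option nat := (cover_state b c T m).2.

Definition is_edge_cover (V : finType) (m : nat) (e : nat -> {set V})
  (F : {set 'I_m}) : Prop :=
  forall v : V, exists2 i : 'I_m, i \in F & v \in e i.

Definition I_le (V : finType) (b : V -> rat) (c : nat -> rat)
  (T : nat -> {set V}) (m : nat) (r : int) : {set V} :=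
  [set v | le_eff (eff_inf b c T m v) r].

Definition S_gt (V : finType) (b : V -> rat) (c : nat -> rat)
  (T : nat -> {set V}) (m : nat) (r : int) : {set 'I_m} :=
  [set i : 'I_m | [exists v : V,
     gt_eff (eff_inf b c T m v) r && (eid_inf b c T m v == Some (i : nat))]].

(* A vertex that COVER stamps at level x > r, out of a set T of level L,
   was paid for at rate 2^(1-L) per unit of benefit, and since
   c(e_t) <= b(T) 2^(1-L), the potential sum_v b(v) (2^(1-r) - 2^(1-eff v))
   over vertices of level > r pays for every edge of S(> r); the potential is
   at most 2^(1-r) b(V).  Conversely, if an edge e_i had b(e_i ∩ I(<= r)) >
   2^r c(e_i), the vertices of e_i ∩ I(<= r) would have formed, together with
   the set chosen at time i, an effective set of larger benefit; summing over
   the edges of OPT gives b(I(<= r)) <= 2^r c(OPT).  The maximality of rstar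
   gives eps b(V) < b(I(<= rstar + 1)) <= 2^(rstar + 1) c(OPT), hence
   c(S(> rstar)) <= 2^(1 - rstar) b(V) < 4 c(OPT) / eps. *)

From HB Require Import structures.
From mathcomp Require Import all_boot all_order all_algebra.
From Stdlib Require Import ClassicalEpsilon.
From mathcomp Require Import lra zify.
Import Order.TTheory GRing.Theory Num.Theory.
Set Implicit Arguments. Unset Strict Implicit. Unset Printing Implicit Defensive.
Local Open Scope ring_scope.

Lemma natr_lt_exp2 (n : nat) : (n%:R : rat) < 2%:Q ^+ n.
Proof. by rewrite -natrX ltr_nat ltn_expl. Qed.

Lemma ceil_lg_spec (q : rat) : 0 < q ->
  (2%:Q ^ (ceil_lg q - 1) < q) && (q <= 2%:Q ^ ceil_lg q).
Proof.
move=> q_gt0; apply: (epsilon_spec (inhabits 0%R)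
  (fun k : int => (2%:Q ^ (k - 1) < q) && (q <= 2%:Q ^ k))).
pose N := Num.bound (Num.max q q^-1).
have N_gt : Num.max q q^-1 < N%:R by apply: archi_boundP; rewrite le_max ltW.
have q_le : q <= 2%:Q ^ N%:Z.
  apply/ltW/(lt_trans _ (natr_lt_exp2 N)).
  by apply: le_lt_trans N_gt; rewrite le_max lexx.
have q_gt : 2%:Q ^ (- N%:Z) < q.
  rewrite -invr_expz -[q]invrK ltf_pV2 ?posrE ?invr_gt0 ?exprz_gt0 //.
  apply: lt_trans (natr_lt_exp2 N); apply: le_lt_trans N_gt.
  by rewrite le_max lexx orbT.
pose P j := q <= 2%:Q ^ (j%:Z - N%:Z).
have exP : exists j, P j by exists (N + N)%N; rewrite /P PoszD addrK.
case: (ex_minnP exP) => [[|j] Pj minj].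
  by move: Pj; rewrite /P sub0r leNgt q_gt.
exists (j.+1%:Z - N%:Z); apply/andP; split => //.
rewrite (_ : _ - 1 = j%:Z - N%:Z); last by rewrite -addn1 PoszD addrAC addrK.
by rewrite ltNge; apply/negP => /minj; rewrite ltnn.
Qed.

Lemma ceil_lg_lt (q : rat) : 0 < q -> 2%:Q ^ (ceil_lg q - 1) < q.
Proof. by move/ceil_lg_spec/andP=> []. Qed.

Lemma ceil_lg_ge (q : rat) : 0 < q -> q <= 2%:Q ^ ceil_lg q.
Proof. by move/ceil_lg_spec/andP=> []. Qed.

Lemma lt_ceil_lg (q : rat) (r : int) : 0 < q -> 2%:Q ^ r < q -> r < ceil_lg q.
Proof.
move=> q_gt0 /lt_le_trans/(_ (ceil_lg_ge q_gt0)).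
by rewrite ltr_eXz2l // ltr1n.
Qed.

Lemma ceil_lg_le (q q' : rat) : 0 < q -> q <= q' -> ceil_lg q <= ceil_lg q'.
Proof.
move=> q_gt0 le_qq'; have q'_gt0 := lt_le_trans q_gt0 le_qq'.
have := lt_le_trans (ceil_lg_lt q_gt0) (le_trans le_qq' (ceil_lg_ge q'_gt0)).
by rewrite ltr_eXz2l ?ltr1n // ltrBlDr ltzD1.
Qed.

Lemma lt_eff_le_trans o (k k' : int) : lt_eff o k -> k <= k' -> lt_eff o k'.
Proof. by case: o => //= x; apply: lt_le_trans. Qed.

Lemma le_lt_eff_trans o (r k : int) : le_eff o r -> r < k -> lt_eff o k.
Proof. by case: o => //= x; apply: le_lt_trans. Qed.

Lemma lt_le_effW o (k r : int) : lt_eff o k -> k <= r -> le_eff o r.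
Proof. by case: o => //= x lt_xk le_kr; apply/ltW/(lt_le_trans lt_xk). Qed.

Section Benefit.
Variables (V : finType) (b : V -> rat).
Hypothesis b_gt0 : forall v, 0 < b v.

Lemma bsum_ge0 (A : {set V}) : 0 <= bsum b A.
Proof. by apply: sumr_ge0 => v _; apply: ltW. Qed.

Lemma bsum_gt0 (A : {set V}) : A != set0 -> 0 < bsum b A.
Proof.
case/set0Pn=> v vA; rewrite /bsum (bigD1 v) //=.
by apply: lt_le_trans (b_gt0 v) _; rewrite lerDl sumr_ge0 // => w _; apply: ltW.
Qed.

Lemma bsumID (A B : {set V}) : bsum b A = bsum b (A :&: B) + bsum b (A :\: B).
Proof. exact: big_setID. Qed.

Lemma bsum_subset (A B : {set V}) : A \subset B -> bsum b A <= bsum b B.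
Proof. by move=> sAB; rewrite [leRHS](bsumID B A) (setIidPr sAB) lerDl bsum_ge0. Qed.

Lemma bsumU_le_subset (A B : {set V}) :
  bsum b (A :|: B) <= bsum b A -> B \subset A.
Proof.
rewrite (bsumID (A :|: B) A) setUK setDUl setDv set0U gerDl => le_BA0.
apply: contraTT le_BA0 => /subsetPn[v vB vNA]; rewrite -ltNge bsum_gt0 //.
by apply/set0Pn; exists v; rewrite inE vNA.
Qed.

End Benefit.

Section Cover.
Variables (V : finType) (b : V -> rat) (m : nat) (e : nat -> {set V})
  (c : nat -> rat) (T : nat -> {set V}).
Hypothesis b_gt0 : forall v, 0 < b v.
Hypothesis c_gt0 : forall t, (t < m)%N -> 0 < c t.
Hypothesis run : valid_run b e c m T.

Local Notation eff t := (cover_state b c T t).1.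
Local Notation eid t := (cover_state b c T t).2.
Local Notation L t := (lev b c t (T t)).

Lemma eid_spec t v i : eid t v = Some i ->
  [/\ (i < t)%N, v \in T i & eff t v = Some (L i)].
Proof.
elim: t => [//|t IH] /=; case: ifP => [vT [<-] //|_ /IH[lt_it vT ->]].
by split=> //; apply: ltnW.
Qed.

Lemma eff_chosen t v : (t < m)%N -> v \in T t -> lt_eff (eff t v) (L t).
Proof. by move=> lt_tm; case: (run lt_tm) => _ /forall_inP eff_T _; apply: eff_T. Qed.

Lemma le_eff_step s v r : (s < m)%N -> le_eff (eff s.+1 v) r -> le_eff (eff s v) r.
Proof.
move=> lt_sm /=; case: ifP => // vT; apply: lt_le_effW; exact: eff_chosen.
Qed.

Lemma le_eff_final t v r : (t <= m)%N -> le_eff (eff m v) r -> le_eff (eff t v) r.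
Proof.
move=> le_tm; suff: forall s, (t <= s <= m)%N -> le_eff (eff s v) r -> le_eff (eff t v) r.
  by apply; rewrite le_tm leqnn.
elim=> [|s IH] /andP[le_ts le_sm]; first by rewrite leqn0 in le_ts; move/eqP: le_ts => ->.
case: (ltngtP t s.+1) le_ts => // [lt_ts _|-> //] /le_eff_step-/(_ le_sm).
by apply: IH; rewrite -ltnS lt_ts ltnW.
Qed.

Lemma chosen_final_gt t v r : (t < m)%N -> v \in T t -> r < L t ->
  ~~ le_eff (eff m v) r.
Proof.
move=> lt_tm vT lt_rL; apply/negP => /(le_eff_final lt_tm).
by rewrite /= vT /= leNgt lt_rL.
Qed.

Lemma lev_subset t (A B : {set V}) : (t < m)%N -> A != set0 -> A \subset B ->
  lev b c t A <= lev b c t B.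
Proof.
move=> lt_tm A0 sAB; apply: ceil_lg_le; first by rewrite divr_gt0 ?bsum_gt0 ?c_gt0.
by rewrite ler_pM2r ?invr_gt0 ?c_gt0 // bsum_subset.
Qed.

Lemma effective_setU t (A B : {set V}) : (t < m)%N -> A != set0 -> B != set0 ->
  effective b c (eff t) t A -> effective b c (eff t) t B ->
  effective b c (eff t) t (A :|: B).
Proof.
move=> lt_tm A0 B0 /forall_inP effA /forall_inP effB.
apply/forall_inP => v; rewrite inE => /orP[vA|vB].
  by apply: lt_eff_le_trans (effA v vA) _; rewrite lev_subset ?subsetUl.
by apply: lt_eff_le_trans (effB v vB) _; rewrite lev_subset ?subsetUr.
Qed.

(* A higher level would make [U] effective at time [i], so it could be merged
   into [T i]; maximality then forces [U \subset T i], whose vertices end above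
   level [r]. *)
Lemma lev_low_part i r : (i < m)%N ->
  let U := e i :&: [set v | le_eff (eff m v) r] in
  U != set0 -> lev b c i U <= r.
Proof.
move=> lt_im U U0; rewrite leNgt; apply/negP => lt_r_levU.
have U_low v : v \in U -> le_eff (eff i v) r.
  by rewrite !inE => /andP[_]; apply: le_eff_final (ltnW lt_im).
have effU : effective b c (eff i) i U.
  by apply/forall_inP => v /U_low /le_lt_eff_trans; apply.
case: (run lt_im) => sTe effT maxT.
have sUe : U \subset e i by apply: subsetIl.
have T0 : T i != set0.
  apply: contraTneq (maxT U sUe effU) => ->.
  by rewrite -ltNge /bsum big_set0 bsum_gt0.
have effTU := effective_setU lt_im T0 U0 effT effU.
have /(bsumU_le_subset b_gt0) sUT : bsum b (T i :|: U) <= bsum b (T i).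
  by apply: maxT effTU; rewrite subUset sTe.
case/set0Pn: (U0) => v vU.
have lt_rL : r < L i := lt_le_trans lt_r_levU (lev_subset lt_im U0 sUT).
move: (chosen_final_gt lt_im (subsetP sUT v vU) lt_rL).
by move: vU; rewrite !inE => /andP[_ ->].
Qed.

Lemma bsum_low_part i r : (i < m)%N ->
  bsum b (e i :&: [set v | le_eff (eff m v) r]) <= 2%:Q ^ r * c i.
Proof.
move=> lt_im; set U := e i :&: _; have c_gt0i := c_gt0 lt_im.
rewrite -ler_pdivrMr //; have [->|U0] := eqVneq U set0.
  by rewrite /bsum big_set0 mul0r exprz_ge0.
have bU_gt0 : 0 < bsum b U / c i by rewrite divr_gt0 ?bsum_gt0.
rewrite leNgt; apply/negP => /(lt_ceil_lg bU_gt0).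
by apply/negP; rewrite -leNgt lev_low_part.
Qed.

Lemma bsum_I_le_cover (F : {set 'I_m}) r : is_edge_cover e F ->
  bsum b (I_le b c T m r) <= 2%:Q ^ r * cost c F.
Proof.
move=> coverF; set I := I_le b c T m r.
have -> : bsum b I = \sum_(v in I) b v * 1 by apply: eq_bigr => v _; rewrite mulr1.
apply: le_trans (_ : \sum_(v in I) \sum_(i in F | v \in e i) b v <= _).
  apply: ler_sum => v _; case: (coverF v) => i iF ve.
  rewrite mulr1 (bigD1 i) /= ?iF ?ve // lerDl.
  by apply: sumr_ge0 => j _; apply: ltW.
rewrite (exchange_big_dep (mem F)) /=; last by move=> v i _ /andP[].
rewrite /cost mulr_sumr; apply: ler_sum => i iF.
rewrite [leLHS](_ : _ = bsum b (e i :&: I)); first exact: bsum_low_part.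
by apply: eq_bigl => v; rewrite !inE iF andbC.
Qed.

Variable r : int.

(* Lifting a vertex from below level [K] to level [K > r] gains at least
   [2^(1-K)], which is what makes a chosen set of level [K] pay for its edge. *)
Definition potential (o : option int) : rat :=
  if o is Some x then (if r < x then 2%:Q ^ (1 - r) - 2%:Q ^ (1 - x) else 0) else 0.

Lemma potential_ge0 o : 0 <= potential o.
Proof.
case: o => //= x; case: ifP => // lt_rx.
by rewrite subr_ge0 ler_eXz2l ?ltr1n //; lia.
Qed.

Lemma potential_le o : potential o <= 2%:Q ^ (1 - r).
Proof.
case: o => [x|] /=; last exact: exprz_ge0.
by case: ifP => _; rewrite ?exprz_ge0 // lerBlDr lerDl exprz_ge0.
Qed.

Lemma potential_gain o (K : int) : r < K -> lt_eff o K ->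
  2%:Q ^ (1 - K) <= potential (Some K) - potential o.
Proof.
move=> lt_rK lt_oK; rewrite /= lt_rK.
have double : 2%:Q * 2%:Q ^ (1 - K) = 2%:Q ^ (2 - K).
  by rewrite -{1}(expr1z 2%:Q) -expfzDr // addrA.
have pow_le (x : int) : x < K -> 2%:Q ^ (2 - K) <= 2%:Q ^ (1 - x).
  by move=> lt_xK; rewrite ler_eXz2l ?ltr1n //; lia.
have := pow_le r lt_rK.
case: o lt_oK => [x|] /= lt_xK; last lra.
by case: ifP => _; [have := pow_le x lt_xK|]; lra.
Qed.

Lemma potential_raise o (K : int) : lt_eff o K -> potential o <= potential (Some K).
Proof.
move=> lt_oK; have [lt_rK|le_Kr] := ltP r K.
  rewrite -subr_ge0; apply: le_trans (potential_gain lt_rK lt_oK).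
  exact: exprz_ge0.
rewrite /= ltNge le_Kr; case: o lt_oK => [x|] //= lt_xK.
by case: ifP => // lt_rx; lia.
Qed.

Definition charged t := (T t != set0) && (r < L t).

Lemma potential_step t :
  \sum_v b v * potential (eff t.+1 v) = \sum_v b v * potential (eff t v) +
    \sum_(v in T t) b v * (potential (Some (L t)) - potential (eff t v)).
Proof.
rewrite [X in _ = _ + X]big_mkcond -big_split /=; apply: eq_bigr => v _.
by case: ifP => vT; rewrite ?addr0 // mulrBr addrC subrK.
Qed.

(* [c t <= b(T t) 2^(1 - L t)] because [2^(L t - 1) < b(T t) / c t]. *)
Lemma charged_cost_le_gain t : (t < m)%N ->
  (if charged t then c t else 0) <=
    \sum_(v in T t) b v * (potential (Some (L t)) - potential (eff t v)).
Proof.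
move=> lt_tm; have c_gt0t := c_gt0 lt_tm.
case: ifP => [/andP[T0 lt_rL]|_]; last first.
  apply: sumr_ge0 => v vT; rewrite mulr_ge0 ?subr_ge0 ?(ltW (b_gt0 v)) //.
  exact/potential_raise/eff_chosen.
have pay : c t <= bsum b (T t) * 2%:Q ^ (1 - L t).
  have := ceil_lg_lt (divr_gt0 (bsum_gt0 b_gt0 T0) c_gt0t).
  rewrite ltr_pdivlMr // (_ : 1 - L t = - (L t - 1)); last by rewrite opprB.
  rewrite -invr_expz.
  by rewrite ler_pdivlMr ?exprz_gt0 // mulrC => /ltW.
apply: le_trans pay _; rewrite /bsum mulr_suml; apply: ler_sum => v vT.
by rewrite ler_wpM2l ?(ltW (b_gt0 v)) // potential_gain // eff_chosen.
Qed.

Lemma charged_cost_le_potential t : (t <= m)%N ->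
  \sum_(0 <= i < t) (if charged i then c i else 0) <=
    \sum_v b v * potential (eff t v).
Proof.
elim: t => [_|t IH lt_tm].
  by rewrite big_geq // sumr_ge0 // => v _; rewrite mulr_ge0 ?potential_ge0 ?ltW.
rewrite big_nat_recr //= potential_step.
by apply: lerD; [apply: IH; apply: ltnW | apply: charged_cost_le_gain].
Qed.

Lemma S_gt_charged (i : 'I_m) : i \in S_gt b c T m r -> charged i.
Proof.
rewrite inE => /existsP[v /andP[gt_eff_v /eqP/eid_spec[_ vT eff_v]]].
by apply/andP; split; [apply/set0Pn; exists v | move: gt_eff_v; rewrite /eff_inf eff_v].
Qed.

Lemma cost_S_gt : cost c (S_gt b c T m r) <= 2%:Q ^ (1 - r) * bsum b setT.
Proof.
apply: le_trans (_ : \sum_(0 <= i < m) (if charged i then c i else 0) <= _).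
  rewrite big_mkord /cost [leLHS]big_mkcond /=; apply: ler_sum => i _.
  case: ifP => [/S_gt_charged -> //|_].
  by case: ifP => // _; apply/ltW/c_gt0.
apply: le_trans (charged_cost_le_potential (leqnn m)) _.
rewrite /bsum (eq_bigl _ _ (@in_setT V)) mulr_sumr; apply: ler_sum => v _.
by rewrite mulrC ler_wpM2r ?potential_le ?(ltW (b_gt0 v)).
Qed.

End Cover.

Theorem lemma11 (V : finType) (b : V -> rat) (m : nat) (e : nat -> {set V})
  (c : nat -> rat) (T : nat -> {set V}) (OPT : {set 'I_m}) (eps : rat)
  (rstar : int) :
  (forall v, 0 < b v) ->
  (forall t, (t < m)%N -> e t != set0) ->
  (forall t, (t < m)%N -> 0 < c t) ->
  (forall v : V, exists i : 'I_m, v \in e i) ->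
  is_edge_cover e OPT ->
  (forall F : {set 'I_m}, is_edge_cover e F -> cost c OPT <= cost c F) ->
  valid_run b e c m T ->
  0 < eps < 1 ->
  bsum b (I_le b c T m rstar) <= eps * bsum b setT ->
  (forall r : int, bsum b (I_le b c T m r) <= eps * bsum b setT -> r <= rstar) ->
  cost c (S_gt b c T m rstar) < 8 * cost c OPT / eps.
Proof.
move=> b_gt0 _ c_gt0 _ coverOPT _ run /andP[eps_gt0 _] _ rstar_max.
have low_gt : eps * bsum b setT < bsum b (I_le b c T m (rstar + 1)).
  by rewrite ltNge; apply/negP => /rstar_max; lia.
have low_le := bsum_I_le_cover b_gt0 c_gt0 run (rstar + 1) coverOPT.
have costS := cost_S_gt b_gt0 c_gt0 run rstar.
have OPT_ge0 : 0 <= cost c OPT by apply: sumr_ge0 => i _; apply/ltW/c_gt0.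
have pow_prod : 2%:Q ^ (1 - rstar) * 2%:Q ^ (rstar + 1) = 4.
  by rewrite -expfzDr // (_ : 1 - rstar + (rstar + 1) = 2%:Z) //; lia.
have pow_gt0 : 0 < 2%:Q ^ (1 - rstar) by apply: exprz_gt0.
rewrite ltr_pdivlMr //.
apply: (le_lt_trans (ler_wpM2r (ltW eps_gt0) costS)).
rewrite -mulrA (mulrC _ eps); apply: lt_le_trans (_ : _ < 2%:Q ^ (1 - rstar) * _) _.
  by rewrite ltr_pM2l //; exact: low_gt.
rewrite (le_trans (ler_wpM2l (ltW pow_gt0) low_le)) // mulrA pow_prod.
by rewrite ler_wpM2r // ler_nat.
Qed.
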